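(* Let $\langle S,L,\tau,\ell\rangle$ be a labelled Markov chain. For every robust bisimulation $R\subseteq S\times S$ we have $R\subseteq\,\simeq$. (Together with the fact that $\simeq$ is a robust bisimulation, $\simeq$ is the greatest robust bisimulation.)
   Context: Labelled Markov chain $\langle S,L,\tau,\ell\rangle$: finite $S$, finite $L$, $\tau:S\to\mathcal{D}(S)$, $\ell:S\to L$, $|\ell(S)|\ge 2$. $\Omega(\mu,\nu)$ = couplings (distributions on $S\times S$ with marginals $\mu,\nu$). A (probabilistic) bisimulation is an equivalence relation $R\subseteq S\times S$ such that for all $(s,t)\in R$, $\ell(s)=\ell(t)$ and some $\omega\in\Omega(\tau(s),\tau(t))$ has $\mathrm{support}(\omega)\subseteq R$. $S^2_\Delta=\{(s,s)\}$, $S^2_1=\{(s,t)\mid\ell(s)\ne\ell(t)\}$. A policy is $P:S\times S\to\mathcal{D}(S\times S)$ with $P(s,t)\in\Omega(\tau(s),\tau(t))$ for $(s,t)\notin S^2_1$ and $P(s,t)$ the point mass at $(s,t)$ for $(s,t)\in S^2_1$; $\mathcal{P}$ is the set of policies; $P$ induces the Markov chain $\langle S\times S,P\rangle$. Robust bisimilarity: $s\simeq t$ iff some $P\in\mathcal{P}$ makes $(s,t)$ reach $S^2_\Delta$ with probability $1$ in $\langle S\times S,P\rangle$. For a policy $P$, a set $R$ supports a path $(u_1,v_1)\dots(u_n,v_n)$ of $\langle S\times S,P\rangle$ if $(u_i,v_i)\in R$ and $\mathrm{support}(P(u_i,v_i))\subseteq R$ for all $i$. A robust bisimulation is a bisimulation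 $R$ such that for every $(s,t)\in R$ there is $P\in\mathcal{P}$ such that $R$ supports a path from $(s,t)$ to $S^2_\Delta$ in $\langle S\times S,P\rangle$. *)

From HB Require Import structures.
From mathcomp Require Import all_boot all_order all_algebra.
From mathcomp Require Import reals.
Set Implicit Arguments. Unset Strict Implicit. Unset Printing Implicit Defensive.
Import Order.TTheory GRing.Theory Num.Theory.
Local Open Scope ring_scope.

Definition is_distr (R : realType) (T : finType) (mu : {ffun T -> R}) : Prop :=
  (forall x, 0 <= mu x) /\ \sum_(x : T) mu x = 1.

Definition is_LMC (R : realType) (S L : finType) (tau : S -> {ffun S -> R})
  (ell : S -> L) : Prop :=
  (forall s, is_distr (tau s)) /\ (2 <= #|[set ell s | s : S]|)%N.

Definition coupling (R : realType) (S : finType) (mu nu : {ffun S -> R})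
  (omega : {ffun S * S -> R}) : Prop :=
  is_distr omega /\
  (forall s, \sum_(t : S) omega (s, t) = mu s) /\
  (forall t, \sum_(s : S) omega (s, t) = nu t).

Definition support_in (R : realType) (S : finType) (omega : {ffun S * S -> R})
  (Rel : rel S) : Prop :=
  forall p : S * S, omega p != 0 -> Rel p.1 p.2.

Definition equivalence_rel (S : finType) (Rel : rel S) : Prop :=
  reflexive Rel /\ symmetric Rel /\ transitive Rel.

Definition bisimulation (R : realType) (S L : finType) (tau : S -> {ffun S -> R})
  (ell : S -> L) (Rel : rel S) : Prop :=
  equivalence_rel Rel /\
  forall s t, Rel s t ->
    ell s = ell t /\ exists omega, coupling (tau s) (tau t) omega /\ support_in omega Rel.

Definition dirac (R : realType) (T : finType) (p : T) : {ffun T -> R} :=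
  [ffun q => if q == p then 1 else 0].

Definition policy (R : realType) (S L : finType) (tau : S -> {ffun S -> R})
  (ell : S -> L) (P : S * S -> {ffun S * S -> R}) : Prop :=
  forall s t,
    (ell s = ell t -> coupling (tau s) (tau t) (P (s, t))) /\
    (ell s <> ell t -> P (s, t) = @dirac R _ (s, t)).

Definition diag (S : finType) (u : S * S) : bool := u.1 == u.2.

(* probability, in the Markov chain <S x S, P>, of reaching S^2_Delta from u
   within n steps *)
Fixpoint reach_within (R : realType) (S : finType) (P : S * S -> {ffun S * S -> R})
  (n : nat) (u : S * S) : R :=
  if diag u then 1 else
  match n with
  | 0 => 0
  | n'.+1 => \sum_(v : S * S) P u v * reach_within P n' v
  end.

(* the probability of eventually reaching S^2_Delta from u is 1, i.e.
   sup_n reach_within P n u = 1 (the events are increasing in n) *)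
Definition reach_prob1 (R : realType) (S : finType) (P : S * S -> {ffun S * S -> R})
  (u : S * S) : Prop :=
  forall eps : R, 0 < eps -> exists n, 1 - eps <= reach_within P n u.

Definition robust_bisimilar (R : realType) (S L : finType) (tau : S -> {ffun S -> R})
  (ell : S -> L) (s t : S) : Prop :=
  exists P, policy tau ell P /\ reach_prob1 P (s, t).

(* Rel supports the path u_1 ... u_n of <S x S, P> (given as u_1 :: us) *)
Definition supports_path (R : realType) (S : finType) (P : S * S -> {ffun S * S -> R})
  (Rel : rel S) (u1 : S * S) (us : seq (S * S)) : Prop :=
  path (fun a b => 0 < P a b) u1 us /\
  (forall u, u \in u1 :: us -> Rel u.1 u.2 /\ support_in (P u) Rel).

Definition robust_bisimulation (R : realType) (S L : finType) (tau : S -> {ffun S -> R})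
  (ell : S -> L) (Rel : rel S) : Prop :=
  bisimulation tau ell Rel /\
  forall s t, Rel s t ->
    exists P, policy tau ell P /\
      exists us, supports_path P Rel (s, t) us /\ diag (last (s, t) us).

From HB Require Import structures.
From mathcomp Require Import all_boot all_order all_algebra.
From mathcomp Require Import reals boolp lra.
Set Implicit Arguments. Unset Strict Implicit. Unset Printing Implicit Defensive.
Import Order.TTheory GRing.Theory Num.Theory.
Local Open Scope ring_scope.

(* For a pair u in the robust bisimulation, let rank u be the length of a
   shortest R-supported path from u to the diagonal, under any policy. Gluing,
   for every u, the first step of the policy realising rank u gives a single
   policy Q that keeps R-pairs inside R and moves, from every non-diagonal
   R-pair, with probability at least d > 0 to a pair of smaller rank. Hence
   within K = max rank steps the diagonal is reached with probability at least
   d^K from every R-pair, and by the Markov property the probability of missing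
   it within j*K steps is at most (1 - d^K)^j, which tends to 0. *)

Lemma exprn_bernoulli_le1 (R : realFieldType) (q : R) (j : nat) :
  0 <= q <= 1 -> q ^+ j * (1 + j%:R * (1 - q)) <= 1.
Proof.
case/andP=> q_ge0 q_le1; elim: j => [|j IH]; first by rewrite expr0 mul0r addr0 mul1r.
have qj_ge0 : 0 <= q ^+ j by exact: exprn_ge0.
have j_ge0 : 0 <= (j%:R : R) by exact: ler0n.
rewrite exprSr -mulrA; apply: le_trans IH; apply: ler_wpM2l => //.
have sq_ge0 : 0 <= (j%:R + 1) * ((1 - q) * (1 - q)).
  by rewrite mulr_ge0 ?addr_ge0 // mulr_ge0 // subr_ge0.
rewrite -natr1; nra.
Qed.

Lemma exists_exprn_le (R : archiRealFieldType) (q eps : R) :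
  0 <= q < 1 -> 0 < eps -> exists j : nat, q ^+ j <= eps.
Proof.
move=> /andP[q_ge0 q_lt1] eps_gt0.
have a_gt0 : 0 < (1 - q) * eps by apply: mulr_gt0; lra.
have inv_ge0 : 0 <= ((1 - q) * eps)^-1 by rewrite invr_ge0 ltW.
pose j := Num.Def.archi_bound ((1 - q) * eps)^-1.
have j_big := archi_boundP inv_ge0.
rewrite -(ltr_pM2r a_gt0) mulVf ?gt_eqF // -/j in j_big.
exists j.
have bern : q ^+ j * (1 + j%:R * (1 - q)) <= 1.
  by apply: exprn_bernoulli_le1; rewrite q_ge0 ltW.
have qj_ge0 : 0 <= q ^+ j by exact: exprn_ge0.
have j_ge0 : 0 <= (j%:R : R) by exact: ler0n.
nra.
Qed.

Lemma pos_lower_bound (R : realDomainType) (T : finType) (f : T -> R) :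
  exists2 d, 0 < d <= 1 & forall x, 0 < f x -> d <= f x.
Proof.
exists (\big[Order.min/1]_(x | 0 < f x) f x); last by move=> x; exact: bigmin_le_cond.
by rewrite bigmin_le_id andbT; apply: lt_bigmin.
Qed.

Lemma dirac_distr (R : realType) (T : finType) (p : T) : is_distr (@dirac R T p).
Proof.
split=> [x|]; first by rewrite ffunE; case: ifP.
rewrite (bigD1 p) //= big1 ?addr0 ?ffunE ?eqxx // => x /negbTE x_neq.
by rewrite ffunE x_neq.
Qed.

Section PolicyFacts.
Variables (R : realType) (S L : finType) (tau : S -> {ffun S -> R}) (ell : S -> L).

Lemma policy_distr P : policy tau ell P -> forall u, is_distr (P u).
Proof.
move=> HP [s t]; have [coupled dirac_else] := HP s t.
case: (eqVneq (ell s) (ell t)) => [/coupled [] //|/eqP/dirac_else ->].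
exact: dirac_distr.
Qed.

Lemma policy_pointwise (PP : S * S -> S * S -> {ffun S * S -> R}) :
  (forall u, policy tau ell (PP u)) -> policy tau ell (fun u => PP u u).
Proof. by move=> HPP s t; exact: HPP (s, t) s t. Qed.

End PolicyFacts.

Section MissProbability.
Variables (R : realType) (S : finType) (P : S * S -> {ffun S * S -> R}) (Rel : rel S).
Hypothesis P_distr : forall u, is_distr (P u).

Definition miss_within n u := 1 - reach_within P n u.

Lemma reach_within_ge0 n u : 0 <= reach_within P n u.
Proof.
elim: n u => [|n IH] u /=; case: ifP => // _.
by apply: sumr_ge0 => v _; apply: mulr_ge0; [case: (P_distr u) | exact: IH].
Qed.

Lemma reach_within_le1 n u : reach_within P n u <= 1.
Proof.
elim: n u => [|n IH] u /=; case: ifP => // _.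
have [P_ge0 P_sum1] := P_distr u.
rewrite -[X in _ <= X]P_sum1; apply: ler_sum => v _.
by rewrite -[X in _ <= X]mulr1; apply: ler_wpM2l.
Qed.

Lemma miss_within_ge0 n u : 0 <= miss_within n u.
Proof. by rewrite /miss_within subr_ge0 reach_within_le1. Qed.

Lemma miss_within_le1 n u : miss_within n u <= 1.
Proof. by rewrite /miss_within gerBl reach_within_ge0. Qed.

Lemma miss_within_diag n u : diag u -> miss_within n u = 0.
Proof. by rewrite /miss_within; case: n => [|n] /= ->; rewrite subrr. Qed.

Lemma miss_withinS n u :
  ~~ diag u -> miss_within n.+1 u = \sum_v P u v * miss_within n v.
Proof.
move=> /negbTE u_ndiag; rewrite /miss_within /= u_ndiag.
have [_ P_sum1] := P_distr u.
rewrite -{1}P_sum1 -sumrB; apply: eq_bigr => v _; by rewrite mulrBr mulr1.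
Qed.

Hypothesis P_closed : forall u, Rel u.1 u.2 -> support_in (P u) Rel.

Definition miss_bounded n (c : R) := forall v, Rel v.1 v.2 -> miss_within n v <= c.

Lemma miss_withinS_le n c u w : miss_bounded n c -> Rel u.1 u.2 -> ~~ diag u ->
  miss_within n.+1 u <= P u w * miss_within n w + (1 - P u w) * c.
Proof.
move=> bounded u_rel u_ndiag; have [P_ge0 P_sum1] := P_distr u.
rewrite miss_withinS // (bigD1 w) //= lerD2l.
have -> : 1 - P u w = \sum_(v | v != w) P u v.
  by rewrite -P_sum1 (bigD1 w) //= addrC addrK.
rewrite mulr_suml; apply: ler_sum => v _.
have [->|v_supp] := eqVneq (P u v) 0; first by rewrite !mul0r.
exact/ler_wpM2l/bounded/(P_closed u_rel v_supp).
Qed.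

Lemma miss_bounded_add n c j : miss_bounded n c -> miss_bounded (n + j) c.
Proof.
move=> bounded; elim: j => [|j IH]; first by rewrite addn0.
move=> u u_rel; rewrite addnS.
have [u_diag|u_ndiag] := boolP (diag u).
  by apply: le_trans (IH u u_rel); rewrite !miss_within_diag.
apply: le_trans (miss_withinS_le u IH u_rel u_ndiag) _.
have [P_ge0 _] := P_distr u.
have := P_ge0 u; have := IH u u_rel; nra.
Qed.

Variables (rank : S * S -> nat) (d : R).
Hypotheses (d_gt0 : 0 < d) (d_le1 : d <= 1).
Hypothesis rank_descent : forall u, Rel u.1 u.2 -> ~~ diag u ->
  exists w, [/\ Rel w.1 w.2, d <= P u w & (rank w < rank u)%N].

Lemma miss_within_rank_le k n c u : miss_bounded n c -> Rel u.1 u.2 ->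
  (rank u <= k)%N -> miss_within (n + k) u <= (1 - d ^+ k) * c.
Proof.
elim: k u => [|k IH] u bounded u_rel u_rank.
  have [u_diag|u_ndiag] := boolP (diag u).
    by rewrite miss_within_diag // expr0 subrr mul0r.
  by have [w [_ _]] := rank_descent u_rel u_ndiag; rewrite ltnNge (leq_trans u_rank).
have c_ge0 : 0 <= c by apply: le_trans (bounded u u_rel); exact: miss_within_ge0.
have dk_ge0 : 0 <= d ^+ k by rewrite exprn_ge0 // ltW.
have dk_le1 : d ^+ k <= 1 by rewrite exprn_ile1 // ltW.
have [u_diag|u_ndiag] := boolP (diag u).
  rewrite miss_within_diag // mulr_ge0 // subr_ge0 exprS.
  by rewrite mulr_ile1 // ltW.
have [w [w_rel d_le_Pw w_rank]] := rank_descent u_rel u_ndiag.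
have w_miss : miss_within (n + k) w <= (1 - d ^+ k) * c.
  by apply: IH => //; rewrite -ltnS (leq_trans w_rank).
have step := miss_withinS_le w (miss_bounded_add k bounded) u_rel u_ndiag.
rewrite addnS; apply: le_trans step _.
have Pw_ge0 : 0 <= P u w by case: (P_distr u).
have Pw_miss : P u w * miss_within (n + k) w <= P u w * ((1 - d ^+ k) * c).
  exact: ler_wpM2l.
have gain : d * (d ^+ k * c) <= P u w * (d ^+ k * c) by rewrite ler_wpM2r ?mulr_ge0.
rewrite exprS; nra.
Qed.

Lemma reach_prob1_of_rank_descent u : Rel u.1 u.2 -> reach_prob1 P u.
Proof.
move=> u_rel eps eps_gt0.
pose K := (\max_(v : S * S) rank v)%N.
have dK_gt0 : 0 < d ^+ K by exact: exprn_gt0.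
have dK_le1 : d ^+ K <= 1 by rewrite exprn_ile1 // ltW.
have geometric j : miss_bounded (j * K) ((1 - d ^+ K) ^+ j).
  elim: j => [|j IH] v v_rel; first by rewrite expr0; exact: miss_within_le1.
  by rewrite mulSnr exprS; apply: miss_within_rank_le => //; exact: leq_bigmax.
have [j small] : exists j, (1 - d ^+ K) ^+ j <= eps.
  by apply: exists_exprn_le => //; apply/andP; split; lra.
exists (j * K)%N; have := geometric j u u_rel; rewrite /miss_within; lra.
Qed.

End MissProbability.

Section RobustBisimulation.
Variables (R : realType) (S L : finType) (tau : S -> {ffun S -> R}) (ell : S -> L)
  (Rel : rel S).
Hypothesis robust : robust_bisimulation tau ell Rel.

Definition robust_path (u : S * S) (k : nat) :=
  exists (P : S * S -> {ffun S * S -> R}) us,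
  [/\ policy tau ell P, supports_path P Rel u us, diag (last u us) & size us = k].

Lemma supports_path_cons (P : S * S -> {ffun S * S -> R}) u w us :
  supports_path P Rel u (w :: us) -> 0 < P u w /\ supports_path P Rel w us.
Proof.
move=> [/= /andP[Puw_gt0 w_path] on_path]; split=> //; split=> // v v_in.
by apply: on_path; rewrite inE v_in orbT.
Qed.

Lemma exists_robust_rank : exists rank : S * S -> nat, forall u, Rel u.1 u.2 ->
  robust_path u (rank u) /\ forall k, robust_path u k -> (rank u <= k)%N.
Proof.
suff /choice[rank rank_spec] : forall u, exists m : nat, Rel u.1 u.2 ->
    robust_path u m /\ forall k, robust_path u k -> (m <= k)%N by exists rank.
move=> [a b].
have [ab_rel|] := pselect (Rel a b); last by exists 0%N.
have : exists k, `[< robust_path (a, b) k >].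
  have [P [HP [us [ab_path us_diag]]]] := robust.2 a b ab_rel.
  by exists (size us); apply/asboolP; exists P, us; split.
case/ex_minnP=> m /asboolP m_path m_min; exists m => _; split=> // k k_path.
exact/m_min/asboolP.
Qed.

Variable rank : S * S -> nat.
Hypothesis rank_min : forall u, Rel u.1 u.2 ->
  robust_path u (rank u) /\ forall k, robust_path u k -> (rank u <= k)%N.

Lemma exists_rank_descent_policy : exists Q, [/\ policy tau ell Q,
  forall u, Rel u.1 u.2 -> support_in (Q u) Rel &
  forall u, Rel u.1 u.2 -> ~~ diag u ->
    exists w, [/\ Rel w.1 w.2, 0 < Q u w & (rank w < rank u)%N]].
Proof.
have [[refl _] _] := robust.1.
have /choice[PP HPP] : forall u, exists P : S * S -> {ffun S * S -> R},
    policy tau ell P /\ (Rel u.1 u.2 -> exists us, [/\ supports_path P Rel u us,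
      diag (last u us) & size us = rank u]).
  move=> u; have [u_rel|u_nrel] := pselect (Rel u.1 u.2).
    have [[P [us [HP u_path us_diag us_size]]] _] := rank_min u_rel.
    by exists P; split=> // _; exists us.
  by have [P [HP _]] := robust.2 u.1 u.1 (refl _); exists P.
exists (fun u => PP u u); split.
- by apply: policy_pointwise => u; case: (HPP u).
- move=> u u_rel; have [_ /(_ u_rel) [us [u_path _ _]]] := HPP u.
  by case: (u_path.2 u (mem_head _ _)).
move=> u u_rel u_ndiag; have [HP /(_ u_rel) [us [u_path us_diag us_size]]] := HPP u.
case: us u_path us_diag us_size => [|w us] u_path us_diag us_size.
  by rewrite us_diag in u_ndiag.
have [Puw_gt0 w_path] := supports_path_cons u_path.
have [w_rel _] := w_path.2 w (mem_head _ _).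
exists w; split=> //; rewrite -us_size ltnS.
by apply: (rank_min w_rel).2; exists (PP u), us.
Qed.

End RobustBisimulation.

Theorem proposition4 (R : realType) (S L : finType) (tau : S -> {ffun S -> R})
  (ell : S -> L) (Rel : rel S) :
  is_LMC tau ell ->
  robust_bisimulation tau ell Rel ->
  forall s t, Rel s t -> robust_bisimilar tau ell s t.
Proof.
move=> _ robust s t st_rel.
have [rank rank_min] := exists_robust_rank robust.
have [Q [HQ Q_closed Q_descent]] := exists_rank_descent_policy robust rank_min.
have [d /andP[d_gt0 d_le1] d_min] :=
  pos_lower_bound (fun p : (S * S) * (S * S) => Q p.1 p.2).
have Q_descent_d : forall u, Rel u.1 u.2 -> ~~ diag u ->
    exists w, [/\ Rel w.1 w.2, d <= Q u w & (rank w < rank u)%N].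
  move=> u u_rel u_ndiag; have [w [w_rel Quw_gt0 w_rank]] := Q_descent u u_rel u_ndiag.
  by exists w; split=> //; apply: (d_min (u, w)).
exists Q; split=> //.
exact: (reach_prob1_of_rank_descent (policy_distr HQ) Q_closed d_gt0 d_le1
  Q_descent_d (u := (s, t)) st_rel).
Qed.
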